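(* Let $R$ be a discrete valuation ring. Every free group is Tannakian over $R$. If $R$ has a coefficient field (a subfield mapping isomorphically onto the residue field), then every abstract group is Tannakian over $R$.
   Context: $\mathrm{Rep}_R(\Gamma)$ is the category of left $R\Gamma$-modules finitely generated over $R$; an abstract group $\Gamma$ is Tannakian over $R$ if every $E\in\mathrm{Rep}_R(\Gamma)$ is the target of a surjective $R\Gamma$-linear map from some object of $\mathrm{Rep}_R(\Gamma)$ whose underlying $R$-module is free. *)

From HB Require Import structures.
From mathcomp Require Import all_boot all_order all_algebra.
Set Implicit Arguments. Unset Strict Implicit. Unset Printing Implicit Defensive.
Import GRing.Theory.
Local Open Scope ring_scope.

Definition is_ideal (R : comNzRingType) (I : R -> Prop) : Prop :=
  [/\ I 0, (forall x y, I x -> I y -> I (x + y)) & (forall r x, I x -> I (r * x))].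

Definition principal_ideal_ring (R : comNzRingType) : Prop :=
  forall I : R -> Prop, is_ideal I ->
    exists a : R, forall x, I x <-> exists r : R, x = r * a.

Definition local_ring (R : comUnitRingType) : Prop :=
  is_ideal (fun x : R => x \isn't a GRing.unit).

Definition is_DVR (R : idomainType) : Prop :=
  [/\ principal_ideal_ring R, local_ring R &
      exists x : R, x != 0 /\ x \isn't a GRing.unit].

(* A coefficient field of a local ring R: a subfield k of R such that the
   composite k -> R -> R/m (m = maximal ideal = non-units) is bijective. *)
Definition is_subfield (R : comUnitRingType) (k : R -> Prop) : Prop :=
  [/\ k 0, k 1,
      (forall x y, k x -> k y -> k (x - y)),
      (forall x y, k x -> k y -> k (x * y)) &
      (forall x, k x -> x != 0 -> x \is a GRing.unit /\ k x^-1)].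

Definition has_coefficient_field (R : comUnitRingType) : Prop :=
  exists k : R -> Prop, is_subfield k /\
    forall r : R, exists! c : R, k c /\ (r - c) \isn't a GRing.unit.

Definition group_hom (G H : groupType) (phi : G -> H) : Prop :=
  forall x y : G, phi (x * y)%g = (phi x * phi y)%g.

Definition is_free_group (G : groupType) : Prop :=
  exists (X : Type) (i : X -> G),
    forall (H : groupType) (f : X -> H),
      exists phi : G -> H,
        [/\ group_hom phi, (forall x, phi (i x) = f x) &
            (forall psi : G -> H, group_hom psi -> (forall x, psi (i x) = f x) ->
                 forall g, psi g = phi g)].

Definition R_linear (R : pzRingType) (U V : lmodType R) (f : U -> V) : Prop :=
  (forall x y, f (x + y) = f x + f y) /\ (forall (a : R) x, f (a *: x) = a *: f x).

Definition is_rep (R : pzRingType) (G : groupType) (V : lmodType R)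
    (act : G -> V -> V) : Prop :=
  [/\ forall g, R_linear (act g),
      (forall v, act 1%g v = v) &
      (forall g h v, act (g * h)%g v = act g (act h v))].

Definition finitely_generated (R : pzRingType) (V : lmodType R) : Prop :=
  exists (n : nat) (e : 'I_n -> V),
    forall v : V, exists c : 'I_n -> R, v = \sum_(i < n) c i *: e i.

Definition free_fin_rank (R : pzRingType) (V : lmodType R) : Prop :=
  exists (n : nat) (f : 'rV[R]_n -> V), R_linear f /\ bijective f.

(* Gamma is Tannakian over R: every object of Rep_R(Gamma) (an R[Gamma]-module
   finitely generated over R) is the target of a surjective R[Gamma]-linear map
   from an object of Rep_R(Gamma) whose underlying R-module is free. *)
Definition tannakian (R : pzRingType) (G : groupType) : Prop :=
  forall (E : lmodType R) (actE : G -> E -> E),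
    is_rep actE -> finitely_generated E ->
    exists (F : lmodType R) (actF : G -> F -> F) (p : F -> E),
      is_rep actF /\ finitely_generated F /\ free_fin_rank F /\
      R_linear p /\ (forall g x, p (actF g x) = actE g (p x)) /\
      (forall y : E, exists x : F, p x = y).

From HB Require Import structures.
From mathcomp Require Import all_boot all_order all_algebra.
From mathcomp Require Import boolp.
Set Implicit Arguments. Unset Strict Implicit. Unset Printing Implicit Defensive.
Import GRing.Theory.

Local Open Scope ring_scope.

(* Free groups: cover E by R^n. Lifts M of an automorphism S of E and M' of S^-1 to
   R^n need not be invertible, but the block matrix [[M, 1], [1 - M' M, -M']] on
   R^n + R^n is, with inverse [[M', 1], [1 - M M', -M]], and it lifts S through the
   first projection. Lifting the action of each free generator in this way, the
   universal property yields an action on R^2n compatible with the one on E.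

   Coefficient field k: the torsion of E is killed by some pi^N, so pi^N E is
   torsion free, hence free with a basis f. Let b in E reduce to a k-basis of
   E / pi^N E. Then R^a + R^d -> E, (u, x) |-> sum u_i f_i + sum x_j b_j is onto;
   g acts on R^d through the matrix of g on E / pi^N E in the basis b, which is
   multiplicative because k-coordinates are unique, and on R^a by the unique
   correction in the free module pi^N E. *)

Section RLinear.
Variables (R : pzRingType) (U V W : lmodType R).

Lemma R_linear_id : R_linear (@id U).
Proof. by []. Qed.

Lemma R_linear_comp (f : V -> W) (g : U -> V) :
  R_linear f -> R_linear g -> R_linear (f \o g).
Proof. by move=> [fD fZ] [gD gZ]; split=> *; rewrite /comp ?gD ?fD ?gZ ?fZ. Qed.

Lemma can_R_linear (f : U -> V) (g : V -> U) :
  R_linear f -> cancel f g -> cancel g f -> R_linear g.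
Proof. by move=> [fD fZ] fK gK; split=> *; apply: (can_inj fK); rewrite ?fD ?fZ !gK. Qed.

Lemma linear_R_linear (f : {linear U -> V}) : R_linear f.
Proof. by split=> *; rewrite ?linearD ?linearZ. Qed.

Variable f : U -> V.
Hypothesis f_lin : R_linear f.

Lemma R_linear0 : f 0 = 0.
Proof. by apply: (addrI (f 0)); rewrite -f_lin.1 !addr0. Qed.

Lemma R_linearB : {morph f : x y / x - y}.
Proof. by move=> x y; rewrite f_lin.1 -scaleN1r f_lin.2 scaleN1r. Qed.

Lemma R_linear_sum I (r : seq I) (P : pred I) (F : I -> U) :
  f (\sum_(i <- r | P i) F i) = \sum_(i <- r | P i) f (F i).
Proof. exact: (big_morph f f_lin.1 R_linear0). Qed.

End RLinear.

Section LinAuto.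
Variables (R : pzRingType) (V W : lmodType R) (p : V -> W).

Record lin_auto := LinAuto {
  auto_src : V -> V; auto_srcV : V -> V; auto_tgt : W -> W; auto_tgtV : W -> W;
  auto_srcK : cancel auto_src auto_srcV; auto_srcVK : cancel auto_srcV auto_src;
  auto_tgtK : cancel auto_tgt auto_tgtV; auto_tgtVK : cancel auto_tgtV auto_tgt;
  auto_src_lin : R_linear auto_src; auto_tgt_lin : R_linear auto_tgt;
  auto_compat : forall v, p (auto_src v) = auto_tgt (p v) }.

HB.instance Definition _ := gen_eqMixin lin_auto.
HB.instance Definition _ := gen_choiceMixin lin_auto.

Lemma lin_auto_eq (a b : lin_auto) :
  auto_src a = auto_src b -> auto_tgt a = auto_tgt b -> a = b.
Proof.
case: a => A Ai S Si AK AiK SK SiK lA lS cA; case: b => B Bi T Ti BK BiK TK TiK lB lT cB /=.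
move=> eAB eST; subst B T.
have eAi : Ai = Bi by apply: funext => v; apply: (can_inj AK); rewrite AiK BiK.
have eSi : Si = Ti by apply: funext => w; apply: (can_inj SK); rewrite SiK TiK.
by subst Bi Ti; congr LinAuto.
Qed.

Definition auto_one : lin_auto :=
  LinAuto (frefl _) (frefl _) (frefl _) (frefl _)
    (@R_linear_id _ _) (@R_linear_id _ _) (frefl _).

Lemma auto_mul_compat (a b : lin_auto) v :
  p ((auto_src a \o auto_src b) v) = (auto_tgt a \o auto_tgt b) (p v).
Proof. by rewrite /= !auto_compat. Qed.

Definition auto_mul (a b : lin_auto) : lin_auto :=
  LinAuto (can_comp (auto_srcK a) (auto_srcK b)) (can_comp (auto_srcVK b) (auto_srcVK a))
    (can_comp (auto_tgtK a) (auto_tgtK b)) (can_comp (auto_tgtVK b) (auto_tgtVK a))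
    (R_linear_comp (auto_src_lin a) (auto_src_lin b))
    (R_linear_comp (auto_tgt_lin a) (auto_tgt_lin b)) (auto_mul_compat a b).

Lemma auto_inv_compat (a : lin_auto) v : p (auto_srcV a v) = auto_tgtV a (p v).
Proof. by apply: (can_inj (auto_tgtK a)); rewrite -auto_compat !auto_srcVK auto_tgtVK. Qed.

Definition auto_inv (a : lin_auto) : lin_auto :=
  LinAuto (auto_srcVK a) (auto_srcK a) (auto_tgtVK a) (auto_tgtK a)
    (can_R_linear (auto_src_lin a) (auto_srcK a) (auto_srcVK a))
    (can_R_linear (auto_tgt_lin a) (auto_tgtK a) (auto_tgtVK a)) (auto_inv_compat a).

Lemma auto_mulA : associative auto_mul.
Proof. by move=> a b c; apply: lin_auto_eq. Qed.

Lemma auto_mul1g : left_id auto_one auto_mul.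
Proof. by move=> a; apply: lin_auto_eq. Qed.

Lemma auto_mulg1 : right_id auto_one auto_mul.
Proof. by move=> a; apply: lin_auto_eq. Qed.

Lemma auto_mulVg : left_inverse auto_one auto_inv auto_mul.
Proof. by move=> a; apply: lin_auto_eq; apply: funext => v /=; rewrite ?auto_srcK ?auto_tgtK. Qed.

Lemma auto_mulgV : right_inverse auto_one auto_inv auto_mul.
Proof. by move=> a; apply: lin_auto_eq; apply: funext => v /=; rewrite ?auto_srcVK ?auto_tgtVK. Qed.

HB.instance Definition _ :=
  isGroup.Build lin_auto auto_mulA auto_mul1g auto_mulg1 auto_mulVg auto_mulgV.

End LinAuto.

Section AutoTgt.
Variables (R : pzRingType) (V W : lmodType R) (p : V -> W).

Definition tgt_auto (a : lin_auto p) : lin_auto (@id W) :=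
  @LinAuto R W W id _ _ _ _ (auto_tgtK a) (auto_tgtVK a) (auto_tgtK a) (auto_tgtVK a)
    (auto_tgt_lin a) (auto_tgt_lin a) (fun _ => erefl).

Lemma tgt_auto_hom : group_hom tgt_auto.
Proof. by move=> a b; apply: lin_auto_eq. Qed.

End AutoTgt.

Lemma group_hom1 (G H : groupType) (phi : G -> H) : group_hom phi -> phi 1%g = 1%g.
Proof. by move=> phiM; apply: (@mulgI _ (phi 1%g)); rewrite -phiM !mulg1. Qed.

Section Rep.
Variables (R : pzRingType) (G : groupType) (E : lmodType R) (act : G -> E -> E).
Hypothesis act_rep : is_rep act.

Lemma rep_lin g : R_linear (act g).
Proof. by case: act_rep. Qed.

Lemma rep1 v : act 1%g v = v.
Proof. by case: act_rep. Qed.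

Lemma repM g h v : act (g * h)%g v = act g (act h v).
Proof. by case: act_rep. Qed.

Lemma repK g : cancel (act g) (act g^-1%g).
Proof. by move=> v; rewrite -repM mulVg rep1. Qed.

Lemma repVK g : cancel (act g^-1%g) (act g).
Proof. by move=> v; rewrite -repM mulgV rep1. Qed.

Definition rep_auto g : lin_auto (@id E) :=
  @LinAuto R E E id _ _ _ _ (repK g) (repVK g) (repK g) (repVK g)
    (rep_lin g) (rep_lin g) (fun _ => erefl).

Lemma rep_auto_hom : group_hom rep_auto.
Proof. by move=> g h; apply: lin_auto_eq; apply: funext => v /=; rewrite repM. Qed.

End Rep.

Section Comb.
Variables (R : pzRingType) (E : lmodType R).

(* Finite families are indexed by nat, only their first n members being relevant. *)
Definition in_span n (e : nat -> E) (v : E) :=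
  exists c : nat -> R, v = \sum_(i < n) c i *: e i.

Definition comb n (e : nat -> E) (x : 'rV[R]_n) : E := \sum_(i < n) x 0 i *: e i.

Lemma comb_is_linear n e : linear (@comb n e).
Proof.
move=> a x y; rewrite /comb scaler_sumr -big_split /=.
by apply: eq_bigr => i _; rewrite !mxE scalerDl scalerA.
Qed.

HB.instance Definition _ n e :=
  GRing.isLinear.Build R 'rV[R]_n E *:%R (@comb n e) (@comb_is_linear n e).

Lemma comb_row n e (c : nat -> R) : comb e (\row_(i < n) c i) = \sum_(i < n) c i *: e i.
Proof. by apply: eq_bigr => i _; rewrite mxE. Qed.

Definition row_coef n (x : 'rV[R]_n) (i : nat) : R :=
  if insub i is Some j then x 0 j else 0.

Lemma row_coefE n (x : 'rV[R]_n) (j : 'I_n) : row_coef x j = x 0 j.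
Proof. by rewrite /row_coef valK. Qed.

Lemma comb_row_coef n (e : nat -> E) (x : 'rV[R]_n) : \sum_(i < n) row_coef x i *: e i = comb e x.
Proof. by apply: eq_bigr => i _; rewrite row_coefE. Qed.

Lemma comb_delta n e (j : 'I_n) : comb e (delta_mx 0 j) = e j.
Proof.
rewrite /comb (bigD1 j) //= big1 ?addr0 => [|i /negbTE nij]; rewrite !mxE ?eqxx ?nij.
  by rewrite scale1r.
by rewrite scale0r.
Qed.

Lemma comb_mulmx n m e (M : 'M[R]_(m, n)) x :
  comb e (x *m M) = \sum_(j < m) x 0 j *: comb e (row j M).
Proof.
rewrite /comb; under eq_bigr => i _ do rewrite mxE scaler_suml.
rewrite exchange_big /=; apply: eq_bigr => j _; rewrite scaler_sumr.
by apply: eq_bigr => i _; rewrite !mxE scalerA.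
Qed.

Lemma comb_surj n e : (forall v, in_span n e v) -> forall v, exists x : 'rV_n, comb e x = v.
Proof. by move=> e_span v; have [c ->] := e_span v; exists (\row_i c i); rewrite comb_row. Qed.

Lemma finitely_generated_span :
  finitely_generated E -> exists n (e : nat -> E), forall v, in_span n e v.
Proof.
move=> [n [e e_span]]; exists n, (fun i => if insub i is Some j then e j else 0) => v.
have [c ->] := e_span v; exists (fun i => if insub i is Some j then c j else 0).
by apply: eq_bigr => i _; rewrite valK.
Qed.

Definition catf (T : Type) a (f g : nat -> T) i := if (i < a)%N then f i else g (i - a)%N.

Lemma sum_catf a b (c1 c2 : nat -> R) (f1 f2 : nat -> E) :
  \sum_(i < a + b) catf a c1 c2 i *: catf a f1 f2 i =
  \sum_(i < a) c1 i *: f1 i + \sum_(i < b) c2 i *: f2 i.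
Proof.
rewrite big_split_ord /=; congr (_ + _); apply: eq_bigr => i _ /=.
  by rewrite /catf ltn_ord.
by rewrite /catf ltnNge leq_addr /= addKn.
Qed.

End Comb.

Lemma rV_finitely_generated (R : pzRingType) n : finitely_generated 'rV[R]_n.
Proof. by exists n, (fun j => 'e_j) => x; exists (fun j => x 0 j); exact: row_sum_delta. Qed.

Lemma rV_free_fin_rank (R : pzRingType) n : free_fin_rank 'rV[R]_n.
Proof. by exists n, id; split; [exact: R_linear_id | exists id]. Qed.

Lemma rV_cover (R : pzRingType) (G : groupType) (E : lmodType R) (actE : G -> E -> E)
    n (actF : G -> 'rV[R]_n -> 'rV[R]_n) (p : 'rV[R]_n -> E) :
  is_rep actF -> R_linear p -> (forall g x, p (actF g x) = actE g (p x)) ->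
  (forall y, exists x, p x = y) ->
  exists (F : lmodType R) (actF : G -> F -> F) (p : F -> E),
    is_rep actF /\ finitely_generated F /\ free_fin_rank F /\
    R_linear p /\ (forall g x, p (actF g x) = actE g (p x)) /\
    (forall y : E, exists x : F, p x = y).
Proof.
move=> actF_rep p_lin p_equiv p_surj; exists 'rV[R]_n, actF, p.
by do !split=> //; [exact: rV_finitely_generated | exact: rV_free_fin_rank].
Qed.

(** * Free groups *)

Section LiftAuto.
Variables (R : pzRingType) (E : lmodType R) (n : nat) (e : nat -> E).
Hypothesis e_span : forall v, in_span n e v.

Lemma lift_R_linear (f : E -> E) :
  R_linear f -> exists M : 'M[R]_n, forall x, comb e (x *m M) = f (comb e x).
Proof.
move=> f_lin; have [pre preK] := choice (comb_surj e_span).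
exists (\matrix_(i, j) pre (f (e i)) 0 j) => x.
rewrite comb_mulmx [in RHS]/comb (R_linear_sum f_lin); apply: eq_bigr => i _.
rewrite f_lin.2 -[f (e i)]preK; congr (_ *: comb e _).
by apply/rowP => j; rewrite !mxE.
Qed.

Definition swap_mx (A B : 'M[R]_n) : 'M[R]_(n + n) :=
  block_mx A 1%:M (1%:M - B *m A) (- B).

Lemma swap_mxK (A B : 'M[R]_n) : swap_mx A B *m swap_mx B A = 1%:M.
Proof.
rewrite mulmx_block (scalar_mx_block n n 1); congr block_mx.
- by rewrite mul1mx addrC subrK.
- by rewrite mulmx1 mul1mx addrN.
- by rewrite mulmxBl mul1mx mulNmx mulmxBr mulmx1 !mulmxA addrN.
- by rewrite mulmx1 mulNmx mulmxN opprK subrK.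
Qed.

Definition comb_lsub (x : 'rV[R]_(n + n)) : E := comb e (lsubmx x).

Lemma comb_lsub_swap (A B : 'M[R]_n) (f f' : E -> E) :
  (forall x, comb e (x *m A) = f (comb e x)) ->
  (forall x, comb e (x *m B) = f' (comb e x)) -> cancel f' f ->
  forall x, comb_lsub (x *m swap_mx A B) = f (comb_lsub x).
Proof.
move=> liftA liftB f'K x; rewrite /comb_lsub -[x]hsubmxK mul_row_block row_mxKl.
rewrite mulmxBr mulmx1 mulmxA !linearD linearN /= !liftA liftB f'K.
by rewrite subrr addr0 row_mxKl.
Qed.

Lemma lin_auto_lift (S : lin_auto (@id E)) :
  exists T : lin_auto comb_lsub, auto_tgt T = auto_tgt S.
Proof.
have [A liftA] := lift_R_linear (auto_tgt_lin S).
have SV_lin := can_R_linear (auto_tgt_lin S) (auto_tgtK S) (auto_tgtVK S).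
have [B liftB] := lift_R_linear SV_lin.
have AB_K (x : 'rV_(n + n)) : x *m swap_mx A B *m swap_mx B A = x.
  by rewrite -mulmxA swap_mxK mulmx1.
have BA_K (x : 'rV_(n + n)) : x *m swap_mx B A *m swap_mx A B = x.
  by rewrite -mulmxA swap_mxK mulmx1.
have swap_lin : R_linear (fun x : 'rV_(n + n) => x *m swap_mx A B).
  by split=> *; rewrite ?mulmxDl ?scalemxAl.
by exists (LinAuto AB_K BA_K (auto_tgtK S) (auto_tgtVK S) swap_lin (auto_tgt_lin S)
             (comb_lsub_swap liftA liftB (auto_tgtVK S))).
Qed.

End LiftAuto.

Definition free_basis (G : groupType) (X : Type) (i : X -> G) :=
  forall (H : groupType) (f : X -> H),
    exists phi : G -> H,
      [/\ group_hom phi, (forall x, phi (i x) = f x) &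
          (forall psi : G -> H, group_hom psi -> (forall x, psi (i x) = f x) ->
               forall g, psi g = phi g)].

Lemma free_hom_eq (G H : groupType) (X : Type) (i : X -> G) (psi psi' : G -> H) :
  free_basis i -> group_hom psi -> group_hom psi' -> (forall x, psi (i x) = psi' (i x)) ->
  psi =1 psi'.
Proof.
move=> i_free psiM psi'M eq_psi g.
have [phi [_ _ phi_uniq]] := i_free H (psi' \o i).
by rewrite (phi_uniq psi) ?(phi_uniq psi').
Qed.

Theorem free_group_tannakian (R : pzRingType) (G : groupType) :
  is_free_group G -> tannakian R G.
Proof.
move=> [X [i i_free]] E actE actE_rep /finitely_generated_span [n [e e_span]].
have [lift lift_tgt] := choice (lin_auto_lift e_span).
have [phi [phiM phi_i _]] := i_free _ (lift \o rep_auto actE_rep \o i).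
have tgt_phi : (fun g => tgt_auto (phi g)) =1 rep_auto actE_rep.
  apply: (free_hom_eq i_free); first by move=> a b /=; rewrite phiM tgt_auto_hom.
    exact: rep_auto_hom.
  by move=> x; apply: lin_auto_eq; rewrite /= phi_i /= lift_tgt.
have phi_tgt g : auto_tgt (phi g) = actE g by rewrite -[LHS]/(auto_tgt (tgt_auto (phi g))) tgt_phi.
apply: (@rV_cover _ _ _ _ _ (fun g => auto_src (phi g)) (comb_lsub e)).
- split=> [g|v|g h v] /=; [exact: auto_src_lin | by rewrite group_hom1 | by rewrite phiM].
- exact: (R_linear_comp (linear_R_linear _) (linear_R_linear _)).
- by move=> g x /=; rewrite auto_compat phi_tgt.
move=> y; have [x <-] := comb_surj e_span y.
by exists (row_mx x 0); rewrite /comb_lsub row_mxKl.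
Qed.

(** * Discrete valuation rings with a coefficient field *)

Lemma DVR_uniformizer (R : idomainType) : is_DVR R ->
  exists pi : R, pi != 0 /\ forall x, x \isn't a GRing.unit <-> exists r, x = r * pi.
Proof.
case=> PIR nonunit_ideal [x [x_neq0 x_nonunit]].
have [pi piP] := PIR _ nonunit_ideal; exists pi; split=> //.
apply: contra_neq x_neq0 => pi0; have [r ->] := (piP x).1 x_nonunit.
by rewrite pi0 mulr0.
Qed.

Section Uniformizer.
Variables (R : idomainType) (pi : R).
Hypothesis PIR : principal_ideal_ring R.
Hypothesis pi_neq0 : pi != 0.
Hypothesis nonunitP : forall x, x \isn't a GRing.unit <-> exists r, x = r * pi.

Lemma pi_nonunit : pi \isn't a GRing.unit.
Proof. by apply/nonunitP; exists 1; rewrite mul1r. Qed.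

Lemma expf_pi_neq0 v : pi ^+ v != 0.
Proof. exact: expf_neq0. Qed.

Lemma pi_power_cancel r v w s t : (v <= w)%N ->
  r = pi ^+ v * s -> r = pi ^+ w * t -> s = pi ^+ (w - v) * t.
Proof.
by move=> le_vw -> rt; apply: (mulfI (expf_pi_neq0 v)); rewrite rt mulrA -exprD subnKC.
Qed.

(* The ideal generated by all r / pi^v would be generated by some b * r / pi^v; as it
   contains r / pi^(v+1) and r / pi^v = pi * r / pi^(v+1), pi would be a unit. *)
Lemma pi_power_dvd_bounded r : r != 0 -> ~ forall v, exists s, r = pi ^+ v * s.
Proof.
move=> r_neq0 r_dvd.
pose I x := exists v a s, r = pi ^+ v * s /\ x = a * s.
have I_ideal : is_ideal I.
  split; first by exists 0%N, 0, r; rewrite expr0 mul1r mul0r.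
  - move=> x y [v [a [s [rs ->]]]] [w [b [t [rt ->]]]].
    case: (leqP v w) => [le_vw|/ltnW le_wv].
      exists w, (a * pi ^+ (w - v) + b), t.
      by rewrite (pi_power_cancel le_vw rs rt) mulrDl mulrA.
    exists v, (a + b * pi ^+ (v - w)), s.
    by rewrite (pi_power_cancel le_wv rt rs) mulrDl mulrA.
  - by move=> c x [v [a [s [rs ->]]]]; exists v, (c * a), s; rewrite mulrA.
have [g gP] := PIR I_ideal.
have [v [b [s [rs g_bs]]]] : I g by apply/gP; exists 1; rewrite mul1r.
have [t rt] := r_dvd v.+1.
have [c t_cg] : exists c, t = c * g by apply/gP; exists v.+1, 1, t; rewrite mul1r.
have s_pit : s = pi * t by rewrite (pi_power_cancel (leqnSn v) rs rt) subSnn expr1.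
have t_neq0 : t != 0 by apply: contra_neq r_neq0 => t0; rewrite rt t0 mulr0.
have : t * (c * b * pi) = t * 1 by rewrite mulr1 {2}t_cg g_bs s_pit mulrA mulrC !mulrA.
move/(mulfI t_neq0) => cbpi1; move: pi_nonunit; case/negP.
by apply/unitrPr; exists (c * b); rewrite mulrC.
Qed.

Lemma pi_power_factor r : r != 0 -> exists v u, u \is a GRing.unit /\ r = u * pi ^+ v.
Proof.
move=> r_neq0; pose D v := exists s, r = pi ^+ v * s.
have [[v [[s rs] not_Dv1]]|no_jump] := pselect (exists v, D v /\ ~ D v.+1).
  exists v, s; split; last by rewrite mulrC.
  apply/negPn/negP => /nonunitP [t st]; apply: not_Dv1.
  by exists t; rewrite rs st exprSr -mulrA (mulrC t).
exfalso; apply: (pi_power_dvd_bounded r_neq0); elim=> [|v Dv].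
  by exists r; rewrite expr0 mul1r.
by apply: contra_notP no_jump => not_Dv1; exists v.
Qed.

End Uniformizer.

Section Subfield.
Variables (R : comUnitRingType) (k : R -> Prop).
Hypothesis k_subfield : is_subfield k.

Lemma subfield0 : k 0. Proof. by case: k_subfield. Qed.
Lemma subfield1 : k 1. Proof. by case: k_subfield. Qed.
Lemma subfieldB x y : k x -> k y -> k (x - y).
Proof. by case: k_subfield => _ _ kB _ _; apply: kB. Qed.
Lemma subfieldM x y : k x -> k y -> k (x * y).
Proof. by case: k_subfield => _ _ _ kM _; apply: kM. Qed.
Lemma subfieldV x : k x -> x != 0 -> x \is a GRing.unit /\ k x^-1.
Proof. by case: k_subfield => _ _ _ _ kV; apply: kV. Qed.

Lemma subfieldD x y : k x -> k y -> k (x + y).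
Proof.
move=> kx ky; rewrite -[y]opprK; apply: subfieldB => //.
by rewrite -sub0r; apply: subfieldB => //; exact: subfield0.
Qed.

Lemma subfield_sum n (F : 'I_n -> R) : (forall i, k (F i)) -> k (\sum_(i < n) F i).
Proof. by move=> kF; apply: big_ind => //; [exact: subfield0 | exact: subfieldD]. Qed.

End Subfield.

Section Submodule.
Variables (R : comNzRingType) (E : lmodType R).

Definition submod (S : E -> Prop) :=
  [/\ S 0, forall x y, S x -> S y -> S (x + y) & forall r x, S x -> S (r *: x)].

Variable S : E -> Prop.
Hypothesis S_submod : submod S.

Lemma submod0 : S 0. Proof. by case: S_submod. Qed.
Lemma submodD x y : S x -> S y -> S (x + y). Proof. by case: S_submod => _ SD _; apply: SD. Qed.
Lemma submodZ r x : S x -> S (r *: x). Proof. by case: S_submod => _ _ SZ; apply: SZ. Qed.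

Lemma submodB x y : S x -> S y -> S (x - y).
Proof. by move=> Sx Sy; rewrite -scaleN1r; apply: submodD => //; apply: submodZ. Qed.

Lemma submod_sum n (F : 'I_n -> E) : (forall i, S (F i)) -> S (\sum_(i < n) F i).
Proof. by move=> SF; apply: big_ind => //; [exact: submod0 | exact: submodD]. Qed.

End Submodule.

Lemma in_span_submod (R : comNzRingType) (E : lmodType R) n (f : nat -> E) :
  submod (in_span n f).
Proof.
split; first by exists (fun _ => 0); rewrite big1 // => i _; rewrite scale0r.
- move=> x y [c ->] [d ->]; exists (fun i => c i + d i); rewrite -big_split /=.
  by apply: eq_bigr => i _; rewrite scalerDl.
- move=> r x [c ->]; exists (fun i => r * c i); rewrite scaler_sumr.
  by apply: eq_bigr => i _; rewrite scalerA.
Qed.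

Section Noetherian.
Variables (R : comNzRingType) (E : lmodType R).
Hypothesis PIR : principal_ideal_ring R.

Lemma last_coef_ideal n (f : nat -> E) (S : E -> Prop) : submod S ->
  is_ideal (fun c => exists2 x, S x & exists d : nat -> R,
                       x = \sum_(i < n) d i *: f i + c *: f n).
Proof.
move=> S_submod; split.
- exists 0; first exact: submod0.
  by exists (fun _ => 0); rewrite big1 ?scale0r ?addr0 // => i _; rewrite scale0r.
- move=> c1 c2 [x1 Sx1 [d1 x1E]] [x2 Sx2 [d2 x2E]].
  exists (x1 + x2); first exact: submodD.
  exists (fun i => d1 i + d2 i); rewrite x1E x2E scalerDl addrACA -big_split /=.
  by congr (_ + _); apply: eq_bigr => i _; rewrite scalerDl.
- move=> r c [x Sx [d xE]]; exists (r *: x); first exact: submodZ.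
  exists (fun i => r * d i); rewrite xE scalerDr scaler_sumr scalerA; congr (_ + _).
  by apply: eq_bigr => i _; rewrite scalerA.
Qed.

(* Induction on the number of generators: the last coefficients of elements of S form a
   principal ideal; subtracting a multiple of an element realising its generator lands
   in S intersected with the span of the first n generators. *)
Lemma submod_finitely_generated n (f : nat -> E) (S : E -> Prop) :
  submod S -> (forall x, S x -> in_span n f x) ->
  exists q (t : nat -> E), (forall i, (i < q)%N -> S (t i)) /\ forall x, S x -> in_span q t x.
Proof.
elim: n S => [|n IHn] S S_submod S_span.
  exists 0%N, (fun _ => 0); split=> // x /S_span [c ->].
  by exists (fun _ => 0); rewrite !big_ord0.
have [a aP] := PIR (last_coef_ideal n f S_submod).
have [s0 Ss0 [d0 s0E]] := (aP a).2 (ex_intro _ 1 (esym (mul1r a))).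
pose S' x := S x /\ in_span n f x.
have S'_submod : submod S'.
  have [S0 SD SZ] := S_submod; have [T0 TD TZ] := in_span_submod n f.
  by split=> [|x y [? ?] [? ?]|r x [? ?]]; split; auto.
have [q [t [St t_span]]] := IHn S' S'_submod (fun x Sx => Sx.2).
exists q.+1, (fun i => if i == q then s0 else t i); split.
  move=> i; rewrite ltnS leq_eqVlt => /predU1P [->|lt_iq]; first by rewrite eqxx.
  by rewrite ltn_eqF //; case: (St i lt_iq).
move=> x Sx; have [c xE] := S_span x Sx.
have [b cnE] : exists b, c n = b * a.
  by apply/aP; exists x => //; exists c; rewrite xE big_ord_recr.
have S'y : S' (x - b *: s0).
  split; first by apply: submodB => //; apply: submodZ.
  exists (fun i => c i - b * d0 i).
  rewrite xE s0E big_ord_recr /= cnE scalerDr scalerA opprD addrACA subrr addr0.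
  by rewrite scaler_sumr -sumrB; apply: eq_bigr => i _; rewrite scalerBl scalerA.
have [c' yE] := t_span _ S'y.
exists (fun i => if i == q then b else c' i).
rewrite big_ord_recr /= eqxx -[x](subrK (b *: s0)) yE; congr (_ + _).
by apply: eq_bigr => i _; rewrite ltn_eqF.
Qed.

End Noetherian.

(* Spanning and independence with coefficients in K modulo Z: used both for a basis
   of the free module pi^N E (K = R, Z = 0) and for a k-basis of E / pi^N E. *)
Section BasisExtraction.
Variables (R : comNzRingType) (E : lmodType R) (K : R -> Prop) (Z X : E -> Prop).
Hypotheses (KB : forall x y, K x -> K y -> K (x - y)) (KM : forall x y, K x -> K y -> K (x * y)).
Hypothesis Z_comb : forall u w r, Z u -> Z w -> Z (u + r *: w).

Definition span_mod a (f : nat -> E) :=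
  (forall i, (i < a)%N -> X (f i)) /\
  forall x, X x -> exists c : nat -> R, (forall i, K (c i)) /\ Z (x - \sum_(i < a) c i *: f i).

Definition indep_mod a (f : nat -> E) :=
  forall c : nat -> R, (forall i, K (c i)) -> Z (\sum_(i < a) c i *: f i) ->
    forall i, (i < a)%N -> c i = 0.

Hypothesis monic_relation : forall a f, (forall i, (i < a)%N -> X (f i)) -> ~ indep_mod a f ->
  exists (d : nat -> R) i1, [/\ (i1 < a)%N, forall i, K (d i), d i1 = 1 &
                                Z (\sum_(i < a) d i *: f i)].

(* A relation with a coefficient 1 lets one drop the corresponding vector. *)
Lemma span_mod_basis a f : span_mod a f -> exists a' f', span_mod a' f' /\ indep_mod a' f'.
Proof.
elim/ltn_ind: a f => a IHa f [Xf f_span].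
have [f_indep|f_dep] := pselect (indep_mod a f); first by exists a, f.
have [d [i1 [lt_i1a Kd d_i1 Zd]]] := monic_relation Xf f_dep.
have a_gt0 : (0 < a)%N by apply: leq_ltn_trans lt_i1a.
pose j1 := Ordinal lt_i1a.
apply: (IHa a.-1 _ (fun i => f (bump i1 i))); first by rewrite prednK.
split=> [i lt_i|x Xx]; first exact: Xf (@lift_subproof a j1 (Ordinal lt_i)).
have [c [Kc Zx]] := f_span x Xx; pose c' i := c i - c i1 * d i.
exists (fun i => c' (bump i1 i)); split=> [i|]; first by apply: KB => //; apply: KM.
have dropE : \sum_(i < a) c' i *: f i = \sum_(i < a.-1) c' (bump i1 i) *: f (bump i1 i).
  by rewrite (bigD1_ord j1) //= /c' d_i1 mulr1 subrr scale0r add0r.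
have c'E : \sum_(i < a) c' i *: f i =
           \sum_(i < a) c i *: f i - c i1 *: \sum_(i < a) d i *: f i.
  by rewrite scaler_sumr -sumrB; apply: eq_bigr => i _; rewrite /c' scalerBl scalerA.
by rewrite -dropE c'E opprB addrA addrAC; apply: Z_comb.
Qed.

End BasisExtraction.

Lemma nontrivial_relation (R : comNzRingType) (E : lmodType R) (K : R -> Prop) (Z : E -> Prop)
    a (f : nat -> E) :
  ~ indep_mod K Z a f ->
  exists c : nat -> R, [/\ forall i, K (c i), Z (\sum_(i < a) c i *: f i) &
                           exists2 i0, (i0 < a)%N & c i0 != 0].
Proof.
move=> f_dep; apply: contra_notP f_dep => no_rel c Kc Zc i lt_ia.
by apply: contra_notP no_rel => /eqP ci_neq0; exists c; split=> //; exists i.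
Qed.

Section CoefficientField.
Variables (R : idomainType) (pi : R) (k : R -> Prop).
Hypothesis PIR : principal_ideal_ring R.
Hypothesis pi_neq0 : pi != 0.
Hypothesis nonunitP : forall x, x \isn't a GRing.unit <-> exists r, x = r * pi.
Hypothesis k_subfield : is_subfield k.
Hypothesis k_residue : forall r, exists c, k c /\ (r - c) \isn't a GRing.unit.

Lemma pi_adic_expansion N r : exists c : nat -> R, (forall j, k (c j)) /\
  exists s, r = \sum_(j < N) c j * pi ^+ j + pi ^+ N * s.
Proof.
elim: N => [|N [c [kc [s rE]]]].
  exists (fun _ => 0); split=> [_|]; first exact: subfield0 k_subfield.
  by exists r; rewrite big_ord0 expr0 mul1r add0r.
have [c' [kc' /nonunitP [t st]]] := k_residue s.
exists (fun j => if j == N then c' else c j); split=> [j|]; first by case: ifP.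
exists t; rewrite big_ord_recr /= eqxx rE -addrA; congr (_ + _).
  by apply: eq_bigr => i _; rewrite ltn_eqF.
by rewrite -[s](subrK c') st mulrDr addrC exprSr (mulrC c') -mulrA (mulrC t).
Qed.

Variables (E : lmodType R) (m : nat) (e : nat -> E).
Hypothesis e_span : forall v, in_span m e v.

Definition torsion (x : E) := exists j, pi ^+ j *: x = 0.

Lemma torsion_submod : submod torsion.
Proof.
split; first by exists 0%N; rewrite scaler0.
- move=> x y [i xi] [j yj]; exists (i + j)%N.
  by rewrite exprD scalerDr {1}mulrC -!scalerA xi yj !scaler0 addr0.
- by move=> r x [i xi]; exists i; rewrite scalerA mulrC -scalerA xi scaler0.
Qed.

Lemma torsion_bounded : exists N, forall x, torsion x -> pi ^+ N *: x = 0.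
Proof.
have [q [t [t_tors t_span]]] :=
  submod_finitely_generated PIR torsion_submod (fun x _ => e_span x).
have J_ex i : exists j, (i < q)%N -> pi ^+ j *: t i = 0.
  by have [/t_tors [j tj]|] := ltnP i q; [exists j | exists 0%N].
have [J tJ] := choice J_ex.
exists (\sum_(i < q) J i)%N => x /t_span [c ->].
rewrite scaler_sumr big1 // => i _; rewrite scalerA mulrC -scalerA.
by rewrite (bigD1 i) //= exprD mulrC -scalerA tJ // !scaler0.
Qed.

Section BoundedTorsion.
Variable N : nat.
Hypothesis torsion_killed : forall x, torsion x -> pi ^+ N *: x = 0.

Definition in_piNE (x : E) := exists y, x = pi ^+ N *: y.

Lemma piNE_submod : submod in_piNE.
Proof.
split; first by exists 0; rewrite scaler0.
- by move=> x y [u ->] [v ->]; exists (u + v); rewrite scalerDr.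
- by move=> r x [u ->]; exists (r *: u); rewrite !scalerA mulrC.
Qed.

Lemma piNE_comb u w r : in_piNE u -> in_piNE w -> in_piNE (u + r *: w).
Proof. by move=> piNu piNw; apply: submodD piNE_submod _ _ piNu (submodZ piNE_submod r piNw). Qed.

Lemma piNE_torsion_free v y : in_piNE y -> pi ^+ v *: y = 0 -> y = 0.
Proof. by move=> [z ->] yv; apply: torsion_killed; exists (v + N)%N; rewrite exprD -scalerA. Qed.

Lemma piNE_sym x y : in_piNE (x - y) -> in_piNE (y - x).
Proof. by move=> xy; rewrite -opprB -scaleN1r; apply: (submodZ piNE_submod). Qed.

Lemma piNE_trans y x z : in_piNE (x - y) -> in_piNE (y - z) -> in_piNE (x - z).
Proof. by move=> xy yz; rewrite -[x](subrK y) -addrA; apply: (submodD piNE_submod). Qed.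

(* Divide a relation by the smallest power of pi occurring in its coefficients;
   the quotient is still a relation because pi^N E is torsion free. *)
Lemma piNE_monic_relation a f : (forall i, (i < a)%N -> in_piNE (f i)) ->
  ~ indep_mod (fun _ => True) (eq^~ 0) a f ->
  exists (d : nat -> R) i1, [/\ (i1 < a)%N, d i1 = 1 & \sum_(i < a) d i *: f i = 0].
Proof.
move=> piNf /nontrivial_relation [c [_ rel [i0 lt_i0a ci0_neq0]]].
pose P v := exists i, [/\ (i < a)%N, c i != 0 &
                          exists2 u, u \is a GRing.unit & c i = u * pi ^+ v].
have P_ex : exists v, `[< P v >].
  have [v [u [u_unit ci0E]]] := pi_power_factor PIR pi_neq0 nonunitP ci0_neq0.
  by exists v; apply/asboolP; exists i0; split=> //; exists u.
case: (ex_minnP P_ex) => v /asboolP [i1 [lt_i1a _ [u1 u1_unit ci1E]]] v_min.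
have d_ex i : exists di, (i < a)%N -> c i = pi ^+ v * di.
  have [lt_ia|] := ltnP i a; last by exists 0.
  have [->|ci_neq0] := eqVneq (c i) 0; first by exists 0; rewrite mulr0.
  have [w [u [u_unit ciE]]] := pi_power_factor PIR pi_neq0 nonunitP ci_neq0.
  have le_vw : (v <= w)%N by apply: v_min; apply/asboolP; exists i; split=> //; exists u.
  by exists (u * pi ^+ (w - v)) => _; rewrite ciE mulrCA -exprD subnKC.
have [d cE] := choice d_ex.
have d_i1 : d i1 = u1 by apply: (mulfI (expf_pi_neq0 pi_neq0 v)); rewrite -cE // ci1E mulrC.
have d_rel : \sum_(i < a) d i *: f i = 0.
  apply: (@piNE_torsion_free v).
    by apply: (submod_sum piNE_submod) => i; apply: (submodZ piNE_submod); exact: piNf.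
  by rewrite scaler_sumr -[RHS]rel; apply: eq_bigr => i _; rewrite scalerA -cE.
exists (fun i => u1^-1 * d i), i1; split=> //; first by rewrite d_i1 mulVr.
by under eq_bigr => i _ do rewrite -scalerA; rewrite -scaler_sumr d_rel scaler0.
Qed.

Lemma piNE_free : exists a f, span_mod (fun _ => True) (eq^~ 0) in_piNE a f /\
                              indep_mod (fun _ => True) (eq^~ 0) a f.
Proof.
apply: (@span_mod_basis _ _ _ _ _ _ _ _ _ m (fun i => pi ^+ N *: e i)) => //.
- by move=> u w r -> ->; rewrite scaler0 addr0.
- move=> a f /piNE_monic_relation monic /monic [d [i1 [? ? ?]]].
  by exists d, i1.
split=> [i _|_ [y ->]]; first by exists (e i).
have [c ->] := e_span y; exists c; split=> //; apply/eqP; rewrite subr_eq0 scaler_sumr.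
by apply/eqP; apply: eq_bigr => i _; rewrite !scalerA mulrC.
Qed.

(* Each generator contributes the vectors pi^j e_n, j < N, by pi-adic expansion of its
   coefficient. *)
Lemma k_span_prefix n : exists a (f : nat -> E), forall x, in_span n e x ->
  exists c : nat -> R, (forall i, k (c i)) /\ in_piNE (x - \sum_(i < a) c i *: f i).
Proof.
elim: n => [|n [a [f IHn]]].
  exists 0%N, (fun _ => 0) => x [c ->].
  exists (fun _ => 0); split=> [_|]; first exact: subfield0 k_subfield.
  by rewrite !big_ord0 subr0; exists 0; rewrite scaler0.
exists (a + N)%N, (catf a f (fun j => pi ^+ j *: e n)) => _ [c ->].
have [c1 [kc1 piN1]] := IHn _ (ex_intro _ c erefl).
have [b [kb [s cnE]]] := pi_adic_expansion N (c n).
exists (catf a c1 b); split=> [i|]; first by rewrite /catf; case: ifP.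
rewrite sum_catf big_ord_recr /= cnE scalerDl scaler_suml -scalerA opprD addrACA.
have -> : \sum_(i < N) b i *: (pi ^+ i *: e n) = \sum_(i < N) (b i * pi ^+ i) *: e n.
  by apply: eq_bigr => i _; rewrite scalerA.
rewrite [X in _ + (X - _)]addrC addrK -[_ *: (_ *: e n)]scale1r.
by apply: piNE_comb => //; exists (s *: e n).
Qed.

Lemma k_monic_relation a f : ~ indep_mod k in_piNE a f ->
  exists (d : nat -> R) i1, [/\ (i1 < a)%N, forall i, k (d i), d i1 = 1 &
                                in_piNE (\sum_(i < a) d i *: f i)].
Proof.
move=> /nontrivial_relation [c [kc rel [i0 lt_i0a ci0_neq0]]].
have [ci0_unit kci0V] := subfieldV k_subfield (kc i0) ci0_neq0.
exists (fun i => (c i0)^-1 * c i), i0; split=> // [i||].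
- exact: subfieldM.
- by rewrite mulVr.
under eq_bigr => i _ do rewrite -scalerA.
by rewrite -scaler_sumr -[_ *: _]add0r; apply: piNE_comb => //; exists 0; rewrite scaler0.
Qed.

Lemma k_basis_mod_piNE : exists d b, span_mod k in_piNE (fun _ => True) d b /\
                                     indep_mod k in_piNE d b.
Proof.
have [a [f f_span]] := k_span_prefix m.
apply: (@span_mod_basis _ _ k in_piNE (fun _ => True) _ _ piNE_comb _ a f).
- exact: subfieldB.
- exact: subfieldM.
- by move=> a' f' _ /k_monic_relation.
by split=> // x _; apply: f_span.
Qed.

Section Cover.
Variables (G : groupType) (actE : G -> E -> E).
Hypothesis actE_rep : is_rep actE.
Variables (a d : nat) (f b : nat -> E).
Hypotheses (f_span : span_mod (fun _ => True) (eq^~ 0) in_piNE a f)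
           (f_indep : indep_mod (fun _ => True) (eq^~ 0) a f)
           (b_span : span_mod k in_piNE (fun _ => True) d b)
           (b_indep : indep_mod k in_piNE d b).

Lemma act_piNE g x : in_piNE x -> in_piNE (actE g x).
Proof. by move=> [y ->]; exists (actE g y); rewrite (rep_lin actE_rep g).2. Qed.

Lemma comb_f_piNE (u : 'rV_a) : in_piNE (comb f u).
Proof. by apply: (submod_sum piNE_submod) => i; apply: (submodZ piNE_submod); exact: f_span.1. Qed.

Lemma comb_f_surj x : in_piNE x -> exists u : 'rV_a, comb f u = x.
Proof.
move=> /f_span.2 [c [_ /eqP]]; rewrite subr_eq0 => /eqP ->.
by exists (\row_i c i); rewrite comb_row.
Qed.

Lemma comb_f_inj : injective (@comb _ _ a f).
Proof.
move=> u u' eq_uu'; apply/rowP => i; apply/eqP; rewrite -subr_eq0; apply/eqP.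
have := f_indep (c := row_coef (u - u')) (fun _ => I) _ (ltn_ord i).
rewrite row_coefE !mxE; apply.
by rewrite comb_row_coef linearB /= eq_uu' subrr.
Qed.

Lemma comb_b_uniq (x x' : 'rV_d) : (forall i, k (x 0 i)) -> (forall i, k (x' 0 i)) ->
  in_piNE (comb b x - comb b x') -> x = x'.
Proof.
move=> kx kx' piN_diff; apply/rowP => i; apply/eqP; rewrite -subr_eq0; apply/eqP.
have k_coef l : k (row_coef (x - x') l).
  rewrite /row_coef; case: insub => [j|]; last exact: subfield0 k_subfield.
  by rewrite !mxE; apply: subfieldB.
have := b_indep k_coef _ (ltn_ord i); rewrite row_coefE !mxE; apply.
by rewrite comb_row_coef linearB.
Qed.

Lemma action_matrix_ex : exists A : G -> 'M[R]_d,
  (forall g j i, k (A g j i)) /\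
  forall g (j : 'I_d), in_piNE (actE g (b j) - comb b (row j (A g))).
Proof.
have coef_ex (gj : G * 'I_d) : exists c : nat -> R, (forall i, k (c i)) /\
    in_piNE (actE gj.1 (b gj.2) - \sum_(i < d) c i *: b i) by exact: b_span.2.
have [c cP] := choice coef_ex.
exists (fun g => \matrix_(j, i) c (g, j) i); split=> [g j i|g j].
  by rewrite mxE; case: (cP (g, j)).
by have [_] := cP (g, j); congr in_piNE; congr (_ - _); apply: eq_bigr => i _; rewrite !mxE.
Qed.

Definition cover (v : 'rV[R]_(a + d)) : E := comb f (lsubmx v) + comb b (rsubmx v).

Lemma cover_is_linear : linear cover.
Proof. by move=> r u v; rewrite /cover !linearP /= scalerDr addrACA. Qed.

HB.instance Definition _ := GRing.isLinear.Build R 'rV[R]_(a + d) E *:%R cover cover_is_linear.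

Lemma cover_inj w w' : cover w = cover w' -> rsubmx w = rsubmx w' -> w = w'.
Proof.
move=> eq_cover eq_r; rewrite -[w]hsubmxK -[w']hsubmxK eq_r; congr row_mx.
by apply: comb_f_inj; move: eq_cover; rewrite /cover eq_r => /addIr.
Qed.

Lemma cover_surj y : exists v, cover v = y.
Proof.
have [c [kc /comb_f_surj [u uE]]] := b_span.2 y I.
by exists (row_mx u (\row_i c i)); rewrite /cover row_mxKl row_mxKr uE comb_row subrK.
Qed.

Section ActionMatrix.
Variable A : G -> 'M[R]_d.
Hypothesis A_k : forall g j i, k (A g j i).
Hypothesis A_act : forall g (j : 'I_d), in_piNE (actE g (b j) - comb b (row j (A g))).

Lemma comb_b_act g x : in_piNE (actE g (comb b x) - comb b (x *m A g)).
Proof.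
rewrite comb_mulmx /comb (R_linear_sum (rep_lin actE_rep g)) -sumrB.
apply: (submod_sum piNE_submod) => j.
by rewrite (rep_lin actE_rep g).2 -scalerBr; apply: (submodZ piNE_submod).
Qed.

Lemma A_k_mul (x : 'rV[R]_d) g : (forall i, k (x 0 i)) -> forall i, k ((x *m A g) 0 i).
Proof.
move=> kx i; rewrite mxE; apply: (subfield_sum k_subfield) => l.
exact: subfieldM.
Qed.

Lemma A_mul g h : A (g * h)%g = A h *m A g.
Proof.
apply/row_matrixP => j; apply: comb_b_uniq => [i|i|]; rewrite ?row_mul.
- by rewrite mxE; apply: A_k.
- by apply: A_k_mul => l; rewrite mxE; apply: A_k.
apply: (piNE_trans (piNE_sym (A_act (g * h) j))); rewrite repM //.
apply: piNE_trans (comb_b_act g _); rewrite -(R_linearB (rep_lin actE_rep g)).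
exact/act_piNE/A_act.
Qed.

Lemma A_one : A 1%g = 1%:M.
Proof.
apply/row_matrixP => j; apply: comb_b_uniq => [i|i|]; rewrite ?row1 ?mxE.
- exact: A_k.
- by case: (i == j); [exact: subfield1 k_subfield | exact: subfield0 k_subfield].
by apply: piNE_sym; rewrite comb_delta -[X in X - _](rep1 actE_rep); apply: A_act.
Qed.

Lemma cover_act_ex g v :
  exists w, cover w = actE g (cover v) /\ rsubmx w = rsubmx v *m A g.
Proof.
have piN_rest : in_piNE (actE g (cover v) - comb b (rsubmx v *m A g)).
  rewrite /cover (rep_lin actE_rep g).1 -addrA.
  by apply: (submodD piNE_submod); [apply/act_piNE/comb_f_piNE | exact: comb_b_act].
have [u uE] := comb_f_surj piN_rest.
by exists (row_mx u (rsubmx v *m A g)); rewrite /cover row_mxKl row_mxKr uE subrK.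
Qed.

(* An action on the cover is determined by its effect on E and on the k-part, since
   [cover] is injective on the lattice part. *)
Lemma cover_rep (actF : G -> 'rV[R]_(a + d) -> 'rV[R]_(a + d)) :
  (forall g v, cover (actF g v) = actE g (cover v) /\ rsubmx (actF g v) = rsubmx v *m A g) ->
  is_rep actF.
Proof.
move=> actFP; have actF_cover g v := (actFP g v).1; have actF_r g v := (actFP g v).2.
split=> [g|v|g h v]; first split=> [v w|r v]; apply: cover_inj.
- by rewrite actF_cover !linearD (rep_lin actE_rep g).1 /= !actF_cover.
- by rewrite actF_r !linearD /= !actF_r mulmxDl.
- by rewrite actF_cover !linearZ (rep_lin actE_rep g).2 /= actF_cover.
- by rewrite actF_r !linearZ /= actF_r scalemxAl.
- by rewrite actF_cover rep1.
- by rewrite actF_r A_one mulmx1.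
- by rewrite !actF_cover repM.
- by rewrite !actF_r A_mul mulmxA.
Qed.

End ActionMatrix.

Lemma cover_tannakian : exists (F : lmodType R) (actF : G -> F -> F) (p : F -> E),
  is_rep actF /\ finitely_generated F /\ free_fin_rank F /\
  R_linear p /\ (forall g x, p (actF g x) = actE g (p x)) /\
  (forall y : E, exists x : F, p x = y).
Proof.
have [A [A_k A_act]] := action_matrix_ex.
have [actF actFP] := choice (fun gv : G * 'rV_(a + d) => cover_act_ex A_act gv.1 gv.2).
apply: (@rV_cover _ _ _ _ _ (fun g v => actF (g, v)) cover).
- exact: (cover_rep A_k A_act (fun g v => actFP (g, v))).
- exact: linear_R_linear.
- by move=> g v; case: (actFP (g, v)).
exact: cover_surj.
Qed.

End Cover.
End BoundedTorsion.

Lemma coefficient_field_cover (G : groupType) (actE : G -> E -> E) : is_rep actE ->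
  exists (F : lmodType R) (actF : G -> F -> F) (p : F -> E),
    is_rep actF /\ finitely_generated F /\ free_fin_rank F /\
    R_linear p /\ (forall g x, p (actF g x) = actE g (p x)) /\
    (forall y : E, exists x : F, p x = y).
Proof.
move=> actE_rep; have [N torsion_killed] := torsion_bounded.
have [a [f [f_span f_indep]]] := piNE_free torsion_killed.
have [d [b [b_span b_indep]]] := k_basis_mod_piNE N.
exact: (cover_tannakian actE_rep f_span f_indep b_span b_indep).
Qed.

End CoefficientField.

Theorem coefficient_field_tannakian (R : idomainType) :
  is_DVR R -> has_coefficient_field R -> forall G : groupType, tannakian R G.
Proof.
move=> R_DVR [k [k_subfield k_coef]] G E actE actE_rep /finitely_generated_span [m [e e_span]].
have [pi [pi_neq0 nonunitP]] := DVR_uniformizer R_DVR.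
have k_residue r : exists c, k c /\ (r - c) \isn't a GRing.unit.
  by have [c [[kc rc] _]] := k_coef r; exists c.
case: R_DVR => PIR _ _.
exact: (coefficient_field_cover PIR pi_neq0 nonunitP k_subfield k_residue e_span).
Qed.

Theorem corollary4p5 (R : idomainType) (hR : is_DVR R) :
  (forall G : groupType, is_free_group G -> tannakian R G) /\
  (has_coefficient_field R -> forall G : groupType, tannakian R G).
Proof.
split; first exact: free_group_tannakian.
exact: coefficient_field_tannakian.
Qed.
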